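(* Let $m\geq 2$ and $n\geq 2$ be integers, let $G_m$ be a graph of order $m$ and $H_n$ a graph of order $n$. Then $rvc(G_m \diamond H_n) \geq rvc(G_m)$.
   Context: All graphs are finite, simple, connected and undirected; $d$ denotes graph distance. For a graph $G$ and $k\in\mathbb{N}$, a rainbow vertex $k$-coloring of $G$ is a map $c:V(G)\to\{1,\dots,k\}$ such that every two vertices $u,v$ are joined by a path whose internal vertices all receive distinct colors (a rainbow vertex path). The rainbow vertex connection number $rvc(G)$ is the least $k$ for which $G$ has a rainbow vertex $k$-coloring. For graphs $G_m$ (order $m$) and $H_n$ (order $n$) on disjoint vertex sets, the edge corona $G_m\diamond H_n$ is obtained from one copy of $G_m$ and $|E(G_m)|$ vertex-disjoint copies of $H_n$, one copy for each edge of $G_m$, by joining the two end vertices of the $j$-th edge of $G_m$ to every vertex of the $j$-th copy of $H_n$, for each $j\in\{1,\dots,|E(G_m)|\}$. *)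

From mathcomp Require Import all_boot.
Set Implicit Arguments. Unset Strict Implicit. Unset Printing Implicit Defensive.

Definition simple_graph (T : finType) (e : rel T) : Prop :=
  symmetric e /\ irreflexive e.

Definition connected_graph (T : finType) (e : rel T) : Prop :=
  forall x y : T, connect e x y.

(* A path from u to v: the sequence u :: p is an e-path without repeated
   vertices ending at v; its internal vertices are those strictly between. *)
Definition internal (T : Type) (u : T) (p : seq T) : seq T := behead (belast u p).

Definition rainbow_vertex_path (T : finType) (e : rel T) (c : T -> nat)
    (u v : T) (p : seq T) : Prop :=
  [/\ path e u p, last u p = v, uniq (u :: p) & uniq (map c (internal u p))].

Definition rv_coloring (T : finType) (e : rel T) (k : nat) (c : T -> nat) : Prop :=
  (forall x, 1 <= c x <= k) /\
  (forall u v : T, exists p, rainbow_vertex_path e c u v p).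

Definition rv_colorable (T : finType) (e : rel T) (k : nat) : Prop :=
  exists c : T -> nat, rv_coloring e k c.

Definition is_rvc (T : finType) (e : rel T) (k : nat) : Prop :=
  rv_colorable e k /\ forall j, rv_colorable e j -> k <= j.

Definition is_edge (T : finType) (e : rel T) (s : {set T}) : bool :=
  [exists x, exists y, e x y && (s == [set x; y])].

Definition edge_type (T : finType) (e : rel T) : finType :=
  {s : {set T} | is_edge e s}.

(* Vertices of the edge corona: the vertices of G, plus for each edge s of G
   a copy of V(H) (vertices (s, h)). *)
Definition ec_vertex (TG : finType) (eG : rel TG) (TH : finType) : finType :=
  (TG + (edge_type eG * TH))%type.

Definition edge_corona (TG : finType) (eG : rel TG) (TH : finType) (eH : rel TH)
  : rel (ec_vertex eG TH) :=
  fun a b =>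
    match a, b with
    | inl x, inl y => eG x y
    | inr (s, h), inr (s', h') => (s == s') && eH h h'
    | inl x, inr (s, _) => x \in val s
    | inr (s, _), inl y => y \in val s
    end.
Arguments edge_corona {TG} eG {TH} eH.

From mathcomp Require Import all_boot.
Set Implicit Arguments. Unset Strict Implicit.

(* Deleting the copies of H from a rainbow vertex path of the edge corona
   between two vertices of G leaves a rainbow vertex path of G: two
   consecutive surviving vertices are either adjacent in G or were separated
   by vertices of the copy of H attached to an edge, and then they are the two
   (distinct) ends of that edge.  The surviving internal vertices form a
   subsequence of the old ones, so they still have distinct colors. *)

Section EdgeCoronaProjection.

Variables (TG TH : finType) (eG : rel TG) (eH : rel TH).
Hypothesis eG_sym : symmetric eG.

Local Notation V := (ec_vertex eG TH).
Local Notation E := (edge_corona eG eH).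

Lemma edge_type_adj (s : edge_type eG) x y :
  x \in val s -> y \in val s -> x != y -> eG x y.
Proof.
case: s => s /= /existsP [x' /existsP [y' /andP [exy /eqP ->]]].
by rewrite !inE => /orP [] /eqP -> /orP [] /eqP ->; rewrite ?eqxx // eG_sym.
Qed.

Definition ec_base (a : V) : option TG := if a is inl x then Some x else None.

Lemma ec_baseK : ocancel ec_base inl.
Proof. by case. Qed.

Definition ec_proj (p : seq V) : seq TG := pmap ec_base p.

Lemma ec_proj_rcons p x : ec_proj (rcons p (inl x)) = rcons (ec_proj p) x.
Proof. by rewrite /ec_proj -!cats1 pmap_cat. Qed.

(* Invariant of [ec_proj_path]: after its last vertex x of G, the walk so far
   stays inside one copy of H, attached to an edge through x. *)
Definition ec_lies_over (x : TG) (a : V) : bool :=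
  if a is inr (s, _) then x \in val s else a == inl x.

Lemma ec_proj_path x a p :
  ec_lies_over x a -> path E a p -> uniq (inl x :: p) -> path eG x (ec_proj p).
Proof.
elim: p x a => [//|b p IHp] x a ax /= /andP [Eab Ebp].
rewrite !inE negb_or => /andP [/andP [xb xp] /andP [bp up]].
case: b => [y|[s h]] in Eab Ebp xb bp *; rewrite /ec_proj /=.
- have eGxy : eG x y.
    case: a => [x'|[s h]] /= in ax Eab; first by case/eqP: ax => <-.
    by apply: edge_type_adj ax Eab _; apply: contra xb => /eqP ->.
  by rewrite eGxy; apply: IHp Ebp _ => //=; rewrite bp.
- apply: IHp Ebp _; last by rewrite /= xp.
  case: a => [x'|[s' h']] /= in ax Eab *; first by case/eqP: ax => <-.
  by case/andP: Eab => /eqP <-.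
Qed.

Lemma internal_rcons (T : Type) (u z : T) p : internal u (rcons p z) = p.
Proof. by rewrite /internal belast_rcons. Qed.

Lemma rainbow_vertex_path_proj (c : V -> nat) u v p :
  rainbow_vertex_path E c (inl u) (inl v) p ->
  rainbow_vertex_path eG (c \o inl) u v (ec_proj p).
Proof.
case/lastP: p => [|p z] [Ep lastp up cp]; first by case: lastp => ->.
rewrite last_rcons in lastp; subst z.
rewrite ec_proj_rcons; split.
- by rewrite -ec_proj_rcons; apply: ec_proj_path Ep up; rewrite /= eqxx.
- by rewrite last_rcons.
- by rewrite -ec_proj_rcons; exact: (pmap_uniq ec_baseK up).
- rewrite !internal_rcons map_comp (pmap_filter ec_baseK) in cp *.
  exact: subseq_uniq (map_subseq _ (filter_subseq _ _)) cp.
Qed.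

Lemma rv_coloring_proj k (c : V -> nat) :
  rv_coloring E k c -> rv_coloring eG k (c \o inl).
Proof.
move=> [c_range c_rainbow]; split=> [x|u v]; first exact: c_range.
have [p rp] := c_rainbow (inl u) (inl v).
by exists (ec_proj p); apply: rainbow_vertex_path_proj.
Qed.

End EdgeCoronaProjection.

Theorem theorem2 (m n : nat) (TG TH : finType) (eG : rel TG) (eH : rel TH) :
  2 <= m -> 2 <= n -> #|TG| = m -> #|TH| = n ->
  simple_graph eG -> connected_graph eG ->
  simple_graph eH -> connected_graph eH ->
  forall a b : nat, is_rvc (edge_corona eG eH) a -> is_rvc eG b -> b <= a.
Proof.
move=> _ _ _ _ [eG_sym _] _ _ _ a b [[c rv_c] _] [_ b_min].
by apply: b_min; exists (c \o inl); apply: rv_coloring_proj rv_c.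
Qed.
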